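(* $Z^*(G)=Z^*(\hat G)$. Moreover, there exists an optimal $\hat G$-r-forest (one attaining $Z^*(\hat G)$) with at most $2r-2$ non-terminal vertices.
   Context: Let $G=(V,E)$ be a connected undirected network with $n$ vertices and edge lengths $c_e>0$. Let $\mathcal R$ be a set of $r\ge2$ relevant pairs (r-pairs) of vertices, with $r$ a fixed constant. A terminal vertex is a vertex belonging to some r-pair. Problem A (general objective) on a network $H$ with vertex set $V$: build edges one at a time at unit speed from time $0$, in some sequence of distinct edges. The connection time of an r-pair $\{u,v\}$ is the earliest time at which $u$ and $v$ are joined by a path of completed edges. The objective $\Phi$ is a non-decreasing function of the connection times of the r-pairs (computable in $O(r)$ time from them), and is to be minimized. It suffices to consider sequences whose edges form a spanning tree of $H$. $\hat G$ is the metric closure of $G$: the complete network on $V$ whose edge $(u,v)$ has length equal to the shortest-path distance in $G$. $Z^*(G)$ and $Z^*(\hat G)$ denote the optimal objective values of Problem A on $G$ and on $\hat G$, respectively, with the same r-pairs and objective. An r-forest in $H$ is a subnetwork that is a forest, joins every r-pair by a path, and each of whose edges lies on the path of some r-pair. For an r-forest, its value is the minimum of $\Phi$ over all orderings of its edges, where the connection time of an r-pair is the completion time of the last-built edge of its path in the forest. A $\hat G$-r-forest is an r-forest in $\hat G$. It is optimal if its value equals $Z^*(\hat G)$. Its non-terminal vertices are its vertices that are not terminal vertices. *)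

From HB Require Import structures.
From mathcomp Require Import all_boot all_order all_algebra.
From mathcomp Require Import boolp reals.
Set Implicit Arguments. Unset Strict Implicit. Unset Printing Implicit Defensive.
Import Order.TTheory GRing.Theory Num.Theory.
Local Open Scope ring_scope.

Section Network.
Variables (V : finType) (R : realType).

(* A network on vertex set V is a symmetric adjacency relation [adj]
   (simple graph, no loops) together with edge lengths [len u v].
   Edges are written as ordered pairs (u,v); the edge they denote is the
   unordered pair {u,v}. *)

Definition uedge (e : V * V) : {set V} := [set e.1; e.2].

Definition erel (es : seq (V * V)) : rel V :=
  fun x y => ((x, y) \in es) || ((y, x) \in es).

Definition edge_seq (adj : rel V) (s : seq (V * V)) : bool :=
  all (fun e => adj e.1 e.2) s && uniq (map uedge s).

(* time at which the first k edges of s are completed (unit speed) *)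
Definition prefix_time (len : V -> V -> R) (s : seq (V * V)) (k : nat) : R :=
  \sum_(e <- take k s) len e.1 e.2.

(* connection time of {a,b}: the earliest time at which a and b are joined
   by a path of completed edges *)
Definition conn_time (len : V -> V -> R) (s : seq (V * V)) (a b : V) : R :=
  prefix_time len s
    (find (fun k => connect (erel (take k s)) a b) (iota 0 (size s).+1)).

Definition feasible r (p : 'I_r -> V * V) (adj : rel V) (s : seq (V * V)) :=
  edge_seq adj s /\ forall i, connect (erel s) (p i).1 (p i).2.

Definition objective r (p : 'I_r -> V * V) (Phi : ('I_r -> R) -> R)
    (len : V -> V -> R) (s : seq (V * V)) : R :=
  Phi (fun i => conn_time len s (p i).1 (p i).2).

(* z is the optimal value Z^*(H) of Problem A on H = (adj, len) *)
Definition is_opt_value r (p : 'I_r -> V * V) (Phi : ('I_r -> R) -> R)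
    (adj : rel V) (len : V -> V -> R) (z : R) : Prop :=
  (exists s, feasible p adj s /\ objective p Phi len s = z) /\
  (forall s, feasible p adj s -> z <= objective p Phi len s).

Fixpoint walk_len (len : V -> V -> R) (x : V) (q : seq V) : R :=
  if q is y :: q' then len x y + walk_len len y q' else 0.

Definition is_shortest_dist (adj : rel V) (len : V -> V -> R)
    (d : V -> V -> R) : Prop :=
  forall u v,
    (exists q, [/\ path adj u q, last u q = v & walk_len len u q = d u v]) /\
    (forall q, path adj u q -> last u q = v -> d u v <= walk_len len u q).

(* adjacency of the metric closure: the complete graph on V *)
Definition complete_adj : rel V := fun u v => u != v.

(* acyclicity of the graph spanned by an edge list: no cycle, i.e. no
   sequence of >= 3 distinct vertices, consecutive (cyclically) ones adjacent *)
Definition is_forest (F : seq (V * V)) : Prop :=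
  forall c : seq V, (3 <= size c)%N -> ~ ucycle (erel F) c.

Definition on_path (F : seq (V * V)) (a b : V) (e : V * V) : Prop :=
  exists q, [/\ path (erel F) a q, last a q = b, uniq (a :: q) &
    exists q1 q2, (a :: q = q1 ++ e.1 :: e.2 :: q2) \/
                  (a :: q = q1 ++ e.2 :: e.1 :: q2)].

Definition r_forest r (p : 'I_r -> V * V) (adj : rel V) (F : seq (V * V)) :=
  [/\ edge_seq adj F, is_forest F,
      (forall i, connect (erel F) (p i).1 (p i).2) &
      (forall e, e \in F -> exists i, on_path F (p i).1 (p i).2 e)].

(* connection time of {a,b} in the forest F built in order s (a permutation
   of F): completion time of the last built edge of its path in F *)
Definition forest_conn_time (len : V -> V -> R) (F s : seq (V * V))
    (a b : V) : R :=
  \big[Num.max/0]_(i < size s |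
      `[< on_path F a b (nth (a, a) s i) >]) prefix_time len s i.+1.

Definition forest_value r (p : 'I_r -> V * V) (Phi : ('I_r -> R) -> R)
    (len : V -> V -> R) (F : seq (V * V)) (z : R) : Prop :=
  let val s := Phi (fun i => forest_conn_time len F s (p i).1 (p i).2) in
  (exists s, perm_eq s F /\ val s = z) /\
  (forall s, perm_eq s F -> z <= val s).

Definition terminal r (p : 'I_r -> V * V) (v : V) : bool :=
  [exists i, (v == (p i).1) || (v == (p i).2)].

Definition nonterminals r (p : 'I_r -> V * V) (F : seq (V * V)) : {set V} :=
  [set v | has (fun e => (v == e.1) || (v == e.2)) F & ~~ terminal p v].

End Network.

(* Every sequence of G is a sequence of the metric closure with edges no
   longer; conversely, expanding each closure edge into a shortest path of G
   and discarding repeated edges yields a sequence of G that joins every r-pair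
   no later.
   In the closure, an optimal sequence can be simplified without loss until it
   is reduced: an edge joining vertices that are already joined, or lying on no
   r-pair path, is dropped, and the two edges at a non-terminal vertex of
   degree 2 are replaced by the edge between its neighbours, which is no longer
   by the triangle inequality.  A reduced optimal sequence is an r-forest whose
   value is its objective and whose non-terminal vertices have degree >= 3;
   since a forest with m edges spans at least m + 1 vertices, counting degrees
   leaves room for at most 2r - 2 of them. *)

From HB Require Import structures.
From mathcomp Require Import all_boot all_order all_algebra.
From mathcomp Require Import boolp reals.
From mathcomp Require Import zify lra.
Import Order.TTheory GRing.Theory Num.Theory.
Local Open Scope ring_scope.
Set Implicit Arguments. Unset Strict Implicit. Unset Printing Implicit Defensive.

Section ConnectionTimes.
Variables (V : finType) (R : realType).
Implicit Types (s t : seq (V * V)) (len : V -> V -> R).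

Lemma erel_sym s : symmetric (erel s).
Proof. by move=> x y; rewrite /erel orbC. Qed.

Lemma sub_erel s1 s2 : {subset s1 <= s2} -> subrel (erel s1) (erel s2).
Proof.
by move=> sub x y; rewrite /erel => /orP[/sub -> | /sub ->]; rewrite ?orbT.
Qed.

Lemma connect_erel_sub s1 s2 a b :
  {subset s1 <= s2} -> connect (erel s1) a b -> connect (erel s2) a b.
Proof. by move=> /sub_erel h; apply: connect_sub => x y /h /connect1. Qed.

Lemma connect_erel_take s k a b :
  connect (erel (take k s)) a b -> connect (erel s) a b.
Proof. by apply: connect_erel_sub => x /mem_take. Qed.

Lemma connect_erelC s a b : connect (erel s) a b = connect (erel s) b a.
Proof. exact: (sym_connect_sym (@erel_sym s)). Qed.

Lemma erel_mem s g x y : g \in s -> g = (x, y) \/ g = (y, x) -> erel s x y.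
Proof. by move=> gs [] e; rewrite e in gs; rewrite /erel gs ?orbT. Qed.

Definition nonneg_lengths len s := forall e, e \in s -> 0 <= len e.1 e.2.

Lemma nonneg_lengthsW len s : (forall u v, 0 <= len u v) -> nonneg_lengths len s.
Proof. by move=> len_ge0 e _; apply: len_ge0. Qed.

Lemma prefix_time_mono len s k1 k2 : nonneg_lengths len s -> (k1 <= k2)%N ->
  prefix_time len s k1 <= prefix_time len s k2.
Proof.
move=> nn le; rewrite /prefix_time -(subnKC le) takeD big_cat /= lerDl.
rewrite big_seq_cond; apply: sumr_ge0 => e /andP[+ _] => /mem_take /mem_drop.
exact: nn.
Qed.

Definition conn_index s a b :=
  find (fun k => connect (erel (take k s)) a b) (iota 0 (size s).+1).

Lemma conn_timeE len s a b :
  conn_time len s a b = prefix_time len s (conn_index s a b).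
Proof. by []. Qed.

Lemma conn_index_spec s a b : connect (erel s) a b ->
  (conn_index s a b <= size s)%N /\ connect (erel (take (conn_index s a b) s)) a b.
Proof.
move=> c.
have hs : has (fun k => connect (erel (take k s)) a b) (iota 0 (size s).+1).
  by apply/hasP; exists (size s); rewrite ?mem_iota ?take_size //=.
have ck : (conn_index s a b <= size s)%N by move: hs; rewrite has_find size_iota.
by split=> //; have := nth_find 0 hs; rewrite nth_iota.
Qed.

Lemma conn_index_min s a b k : (k <= size s)%N ->
  connect (erel (take k s)) a b -> (conn_index s a b <= k)%N.
Proof.
move=> ks c; rewrite leqNgt; apply/negP => lt.
by have := before_find 0 lt; rewrite nth_iota ?c // ltnS.
Qed.

Lemma conn_time_le len s a b k : nonneg_lengths len s -> (k <= size s)%N ->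
  connect (erel (take k s)) a b -> conn_time len s a b <= prefix_time len s k.
Proof. by move=> nn ks c; apply: prefix_time_mono => //; apply: conn_index_min. Qed.

Definition joins_no_later len s len' s' a b := forall k, (k <= size s)%N ->
  connect (erel (take k s)) a b -> exists k', [/\ (k' <= size s')%N,
    connect (erel (take k' s')) a b & prefix_time len' s' k' <= prefix_time len s k].

Lemma conn_time_no_later len len' s s' a b : nonneg_lengths len' s' ->
  connect (erel s) a b -> joins_no_later len s len' s' a b ->
  connect (erel s') a b /\ conn_time len' s' a b <= conn_time len s a b.
Proof.
move=> nn c h; have [ck1 ck2] := conn_index_spec c.
have [k' [k'le c' le]] := h _ ck1 ck2.
split; first exact: connect_erel_take c'.
by apply: le_trans le; apply: conn_time_le.
Qed.

End ConnectionTimes.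

Section PathsAndForests.
Variables (V : finType).
Implicit Types (s t : seq (V * V)).

Lemma uedge_sym (x y : V) : uedge (x, y) = uedge (y, x).
Proof. by rewrite /uedge /= setUC. Qed.

Lemma uedge_pair (g : V * V) x y :
  uedge g = uedge (x, y) -> g = (x, y) \/ g = (y, x).
Proof.
case: g => g1 g2 /setP h.
have h1 := h g1; have h2 := h g2; have hx := h x; have hy := h y.
rewrite /uedge /= !in_set2 !eqxx ?orbT /= in h1 h2 hx hy.
move: h1 => /esym /orP[] /eqP e1; move: h2 => /esym /orP[] /eqP e2; subst.
- by move: hy => /orP[] /eqP ->; left.
- by left.
- by right.
- by move: hx => /orP[] /eqP ->; left.
Qed.

Lemma erel_avoid s g z x y : (z = g.1 \/ z = g.2) -> x != z -> y != z ->
  erel s x y -> erel [seq f <- s | uedge f != uedge g] x y.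
Proof.
move=> hz xz yz.
have ne a b : a != z -> b != z -> uedge (a, b) != uedge g.
  move=> az bz; apply/negP => /eqP e.
  have : z \in uedge g by rewrite /uedge !inE; case: hz => ->; rewrite eqxx ?orbT.
  by rewrite -e /uedge !inE /= => /orP[] /eqP ez; rewrite ez eqxx in az bz.
rewrite /erel !mem_filter => /orP[h|h]; apply/orP; [left|right].
  by rewrite h andbT; apply: ne.
by rewrite h andbT; apply: ne.
Qed.

Lemma connect_upath (e : rel V) a b : connect e a b ->
  exists q, [/\ path e a q, last a q = b & uniq (a :: q)].
Proof. by case/connectP=> q pq ->; case: (shortenP pq) => q' pq' uq' _; exists q'. Qed.

Lemma path_consecutive (e : rel V) l1 x0 q x y l2 :
  path e x0 q -> x0 :: q = l1 ++ x :: y :: l2 -> e x y.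
Proof.
elim: l1 x0 q => [|z l1 IH] x0 q pq /=; first by case=> e1 e2; subst; case/andP: pq.
case=> e1; subst; case: q pq => [|w q] /=; first by case: l1 {IH}.
by case/andP=> _ pq eq; apply: (IH w q pq); rewrite eq.
Qed.

Lemma path_consecutive_sub (e e' : rel V) x0 q :
  (forall l1 x y l2, x0 :: q = l1 ++ x :: y :: l2 -> e x y -> e' x y) ->
  path e x0 q -> path e' x0 q.
Proof.
elim: q x0 => [|y q IH] x0 //= h /andP[exy pq]; apply/andP; split.
  by apply: (h [::]).
by apply: IH pq => l1 x z l2 eq; apply: (h (x0 :: l1)); rewrite eq.
Qed.

Lemma path_prefix_avoid (e e' : rel V) a q l1 z1 z2 l2 :
  path e a q -> a :: q = l1 ++ z1 :: z2 :: l2 -> uniq (a :: q) ->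
  (forall x y, x != z2 -> y != z2 -> e x y -> e' x y) -> connect e' a z1.
Proof.
move=> pq dec uq h; case: l1 dec => [|a' l1] /= dec.
  by case: dec => -> _; apply: connect0.
case: dec => ea eq; subst a'.
have hz : z2 \notin a :: rcons l1 z1.
  have e2 : a :: q = (a :: rcons l1 z1) ++ z2 :: l2 by rewrite eq /= -cats1 -catA.
  move: uq; rewrite e2 cat_uniq => /and3P[_ /hasPn hn _].
  by apply: hn; rewrite mem_head.
apply/connectP; exists (rcons l1 z1); last by rewrite last_rcons.
move: pq; rewrite eq cat_path /= => /and3P[p1 r1 _].
apply: (sub_in_path (P := predC1 z2)).
- by move=> x y; rewrite !inE; apply: h.
- by apply/allP => x xin /=; apply: contraNneq hz => <-.
- by rewrite rcons_path p1 r1.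
Qed.

Lemma path_suffix_avoid (e e' : rel V) a q l1 z1 z2 l2 :
  path e a q -> a :: q = l1 ++ z1 :: z2 :: l2 -> uniq (a :: q) ->
  (forall x y, x != z1 -> y != z1 -> e x y -> e' x y) -> connect e' z2 (last a q).
Proof.
move=> pq dec uq h.
have p2 : path e z2 l2.
  move: pq; rewrite -[path e a q]/(path e a (behead (a :: q))).
  case: l1 dec => [|a' l1] /= dec; first by case: dec => _ -> /= /andP[].
  by case: dec => _ ->; rewrite cat_path /= => /and4P[].
have lq : last a q = last z2 l2.
  by rewrite -[last a q]/(last a (a :: q)) dec last_cat.
apply/connectP; exists l2; last by rewrite lq.
have hz : z1 \notin z2 :: l2 by move: uq; rewrite dec cat_uniq /= => /and3P[_ _ /andP[]].
apply: (sub_in_path (P := predC1 z1)) p2.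
- by move=> x y; rewrite !inE; apply: h.
- by apply/allP => x xin /=; apply: contraNneq hz => <-.
Qed.

Lemma ucycle_next_path (e : rel V) c x : ucycle e c -> x \in c -> (3 <= size c)%N ->
  exists q, [/\ path e (next c x) (rcons q x), uniq (x :: next c x :: q) & q != [::]].
Proof.
move=> /andP[cyc uq] xc sz; case: (rot_to xc) => i p def.
have cyc' : cycle e (x :: p) by rewrite -def rot_cycle.
have uq' : uniq (x :: p) by rewrite -def rot_uniq.
have nx : next (x :: p) x = next c x by rewrite -def next_rot.
have sz' : (3 <= size (x :: p))%N by rewrite -def size_rot.
case: p def cyc' uq' nx sz' => [|y [|y2 q]] // _ cyc' uq' nx _.
rewrite /= eqxx in nx; rewrite -nx.
by exists (y2 :: q); split=> //; case/andP: cyc'.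
Qed.

Lemma forest_nil : is_forest ([::] : seq (V * V)).
Proof. by move=> [|x [|y c]] //= _ /andP[/andP[]]. Qed.

Lemma forest_rcons t e :
  is_forest t -> ~~ connect (erel t) e.1 e.2 -> is_forest (rcons t e).
Proof.
move=> ft nc c sz uc; have /andP[cyc ucq] := uc.
have [hall|/allPn[x xc nex]] := boolP (all (fun x => erel t x (next c x)) c).
  apply: (ft c sz); apply/andP; split=> //.
  by apply: cycle_from_next => // x xc; apply: (allP hall x xc).
have [q [pq uq qn]] := ucycle_next_path uc xc sz.
have ee : ((x, next c x) == e) || ((next c x, x) == e).
  move: (next_cycle cyc xc) nex; rewrite /erel !mem_rcons !in_cons.
  by case: (_ == e); case: (_ == e); rewrite ?orbT //= => ->.
set y := next c x in pq uq ee.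
have [hx hy] : (x = e.1 \/ x = e.2) /\ (y = e.1 \/ y = e.2).
  by case/orP: ee => /eqP <-; split; [left | right | right | left].
have avoid z : z = e.1 \/ z = e.2 ->
    forall u w, u != z -> w != z -> erel (rcons t e) u w -> erel t u w.
  move=> hz u w uz wz /(erel_avoid hz uz wz); apply: sub_erel => f.
  rewrite mem_filter mem_rcons in_cons => /andP[fe /orP[/eqP ef|//]].
  by rewrite ef eqxx in fe.
move: pq uq; rewrite rcons_path => /andP[pt lst] /= /andP[].
rewrite in_cons negb_or => /andP[xy xq] /andP[yq _].
have pt' : path (erel t) y q.
  apply: (@sub_in_path _ (predC1 x) (erel (rcons t e)) _ _ y q _ pt).
    by move=> u w; rewrite !inE; apply: (avoid x hx).
  apply/allP => u; rewrite in_cons => /orP[/eqP -> | uq] /=; first by rewrite eq_sym.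
  by apply: contraNneq xq => <-.
have ly : last y q != y.
  by case: q qn yq {pt pt' lst xq} => // z q' _ yq'; apply: contraNneq yq' => /= <-; apply: mem_last.
have lt : erel t (last y q) x by apply: (avoid y hy) => //; rewrite eq_sym.
have cyx : connect (erel t) y x.
  by apply/connectP; exists (rcons q x); rewrite ?rcons_path ?pt' ?lt ?last_rcons.
by case/orP: ee => /eqP ee; move: nc; rewrite -ee /=; [rewrite connect_erelC|]; rewrite cyx.
Qed.

Lemma forest_cut (F : seq (V * V)) (e : V * V) : is_forest F -> e \in F -> e.1 != e.2 ->
  ~ connect (erel [seq f <- F | uedge f != uedge e]) e.1 e.2.
Proof.
move=> fF eF ne /connect_upath[q [pq lq uq]].
apply: (fF (e.1 :: q)).
  case: q pq lq uq => [|y [|y2 q]] //=; first by move=> _ h; rewrite h eqxx in ne.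
  move=> pq ly _; move: pq; rewrite ly /erel !mem_filter [uedge (e.2, e.1)]uedge_sym.
  by rewrite -surjective_pairing eqxx.
rewrite /ucycle uq andbT /= rcons_path; apply/andP; split.
  by apply: sub_path pq; apply: sub_erel => f; rewrite mem_filter => /andP[].
by rewrite lq /erel -surjective_pairing eF orbT.
Qed.

End PathsAndForests.

Section Incidence.
Variables (V : finType).
Implicit Types (s t : seq (V * V)).

Definition incid (v : V) (e : V * V) := (v == e.1) || (v == e.2).
Definition touched s v := has (incid v) s.
Definition deg s v := count (incid v) s.

Definition forest_seq s :=
  forall s1 e s2, s = s1 ++ e :: s2 -> ~~ connect (erel s1) e.1 e.2.

Lemma forest_seq_forest s : forest_seq s -> is_forest s.
Proof.
elim/last_ind: s => [|t e IH] fs; first exact: forest_nil.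
apply: forest_rcons; last by apply: (fs t e [::]); rewrite cats1.
by apply: IH => s1 e' s2 def; apply: (fs s1 e' (rcons s2 e)); rewrite def rcons_cat.
Qed.

Lemma forest_seq_nth s x0 j : forest_seq s -> (j < size s)%N ->
  ~~ connect (erel (take j s)) (nth x0 s j).1 (nth x0 s j).2.
Proof.
move=> fs lt; apply: (fs _ _ (drop j.+1 s)).
by rewrite -(drop_nth x0 lt) cat_take_drop.
Qed.

Lemma handshake s : (forall e, e \in s -> e.1 != e.2) ->
  (\sum_(v : V) deg s v = 2 * size s)%N.
Proof.
move=> ne; rewrite /deg.
transitivity (\sum_(v : V) \sum_(e <- s) (incid v e : nat))%N.
  apply: eq_bigr => v _; rewrite -sum1_count big_mkcond /=.
  by apply: eq_bigr => e _; case: incid.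
rewrite exchange_big /=.
transitivity (\sum_(e <- s) 2)%N.
  rewrite big_seq [RHS]big_seq; apply: eq_bigr => e es.
  rewrite -[2%N](_ : (e.1 != e.2).+1 = 2)%N; last by rewrite ne.
  rewrite -cards2 -sum1_card [RHS]big_mkcond /=; apply: eq_bigr => v _.
  by rewrite !inE /incid; case: (_ || _).
by rewrite big_const_seq count_predT iter_addn_0 mulnC.
Qed.

Lemma touched_mem s e : e \in s -> touched s e.1 /\ touched s e.2.
Proof. by move=> es; split; apply/hasP; exists e; rewrite // /incid eqxx ?orbT. Qed.

Lemma touched_path t a q : path (erel t) a q -> forall u, u \in q -> touched t u.
Proof.
elim: q a => [|b q IH] a //= /andP[ab pb] u; rewrite in_cons => /orP[/eqP -> | uq].
  by case/orP: ab => /touched_mem[].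
exact: IH pb u uq.
Qed.

Lemma touched_connect t a b : connect (erel t) a b -> a != b -> touched t b.
Proof.
case/connectP => q pq ->; have := mem_last a q; rewrite in_cons.
by case/orP=> [/eqP ->|/(touched_path pq)]; rewrite ?eqxx.
Qed.

Definition other (v : V) (e : V * V) := if v == e.1 then e.2 else e.1.

Lemma other_spec (v : V) (e : V * V) : incid v e -> e.1 != e.2 ->
  (e = (v, other v e) \/ e = (other v e, v)) /\ other v e != v.
Proof.
case: e => a b; rewrite /incid /other /=.
case: (eqVneq v a) => [<-|va] /= h ne; first by split; [left | rewrite eq_sym].
by move/eqP: h => eb; subst; split; [right | ].
Qed.

Lemma erel_other s v y : erel s v y -> exists2 g, g \in s & incid v g /\ y = other v g.
Proof.
rewrite /erel /incid /other => /orP[h|h]; first by exists (v, y); rewrite //= eqxx.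
by exists (y, v); rewrite //= eqxx orbT; split=> //; case: eqP.
Qed.

Lemma erel_bypass s s' v x y : x != v -> y != v ->
  {subset [seq g <- s | ~~ incid v g] <= s'} -> erel s x y -> erel s' x y.
Proof.
move=> xv yv sub; have nxy g : g = (x, y) \/ g = (y, x) -> ~~ incid v g.
  by case=> ->; rewrite /incid negb_or ![v == _]eq_sym xv yv.
rewrite /erel => /orP[h|h]; apply/orP; [left|right]; apply: sub.
  by rewrite mem_filter h nxy //; left.
by rewrite mem_filter h nxy //; right.
Qed.

Lemma connect_bypass (e e' : rel V) v a b : symmetric e -> a != v -> b != v ->
  (forall x y, x != v -> y != v -> e x y -> e' x y) ->
  (forall y y', e v y -> e v y' -> connect e' y y') ->
  connect e a b -> connect e' a b.
Proof.
move=> sym av bv h1 h2.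
pose Inv x := if x == v then forall y, e v y -> connect e' a y else connect e' a x.
have inv q x : Inv x -> path e x q -> Inv (last x q).
  elim: q x => [|y q IH] x //= Ix /andP[xy pq]; apply: IH pq; move: Ix; rewrite /Inv.
  case: (eqVneq x v) => [exv|xv]; case: (eqVneq y v) => [eyv|yv] //.
  - by move=> H; apply: H; rewrite -exv.
  - move=> cax y' vy'; apply: connect_trans cax _; apply: h2 vy'.
    by rewrite sym -eyv.
  - by move=> cax; apply: connect_trans cax (connect1 _); apply: h1.
move=> /connectP[q pq eb]; rewrite eb.
move: (inv q a); rewrite /Inv (negbTE av) => /(_ (connect0 _ _) pq).
by rewrite -eb (negbTE bv).
Qed.

Lemma connect_erel_bypass s s' v a b : a != v -> b != v ->
  {subset [seq g <- s | ~~ incid v g] <= s'} ->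
  (forall y y', erel s v y -> erel s v y' -> connect (erel s') y y') ->
  connect (erel s) a b -> connect (erel s') a b.
Proof.
move=> av bv sub; apply: connect_bypass => //; first exact: erel_sym.
by move=> x y xv yv; apply: erel_bypass xv yv sub.
Qed.

Lemma connect_drop_leaf l1 e l2 v a b : a != v -> b != v -> incid v e ->
  ~~ has (incid v) (l1 ++ l2) ->
  connect (erel (l1 ++ e :: l2)) a b -> connect (erel (l1 ++ l2)) a b.
Proof.
move=> av bv ie /hasPn noinc; apply: connect_erel_bypass av bv _ _.
  move=> g; rewrite mem_filter !(mem_cat, in_cons).
  by case/andP=> ng /or3P[->|/eqP gE|->]; rewrite ?orbT //; rewrite gE ie in ng.
have only g : g \in l1 ++ e :: l2 -> incid v g -> g = e.
  rewrite mem_cat in_cons => /or3P[gl|/eqP //|gl] ig;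
    suff : incid v g = false by rewrite ig.
    by apply/negbTE/noinc; rewrite mem_cat gl.
  by apply/negbTE/noinc; rewrite mem_cat gl orbT.
move=> y y' /erel_other[g gL [ig ->]] /erel_other[g' gL' [ig' ->]].
by rewrite (only g gL ig) (only g' gL' ig'); apply: connect0.
Qed.

Lemma connect_shortcut l1 e1 l2 e2 l3 v a b :
  a != v -> b != v -> incid v e1 -> incid v e2 -> ~~ has (incid v) (l1 ++ l2 ++ l3) ->
  connect (erel (l1 ++ e1 :: l2 ++ e2 :: l3)) a b ->
  connect (erel (l1 ++ l2 ++ (other v e1, other v e2) :: l3)) a b.
Proof.
move=> av bv i1 i2 /hasPn noinc; apply: connect_erel_bypass av bv _ _.
  move=> g; rewrite mem_filter !(mem_cat, in_cons).
  case/andP=> ng /or3P[->|/eqP gE|/orP[->|/orP[/eqP gE|->]]]; rewrite ?orbT //.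
    by rewrite gE i1 in ng.
  by rewrite gE i2 in ng.
have only g : g \in l1 ++ e1 :: l2 ++ e2 :: l3 -> incid v g ->
    other v g = other v e1 \/ other v g = other v e2.
  rewrite !(mem_cat, in_cons).
  case/or3P=> [gl|/eqP -> _|/orP[gl|/orP[/eqP -> _|gl]]]; [|by left| |by right|];
    move=> ig; suff : incid v g = false by rewrite ig.
  - by apply/negbTE/noinc; rewrite mem_cat gl.
  - by apply/negbTE/noinc; rewrite !mem_cat gl !orbT.
  - by apply/negbTE/noinc; rewrite !mem_cat gl !orbT.
have cuw : connect (erel (l1 ++ l2 ++ (other v e1, other v e2) :: l3))
    (other v e1) (other v e2).
  by apply: connect1; rewrite /erel !(mem_cat, in_cons) eqxx !orbT.
move=> y y' /erel_other[g gL [ig ->]] /erel_other[g' gL' [ig' ->]].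
case: (only g gL ig) => ->; case: (only g' gL' ig') => ->; rewrite ?connect0 //.
by rewrite connect_erelC.
Qed.

Definition vrank (v : V) : nat := enum_rank v.

Lemma vrank_inj : injective vrank.
Proof. by move=> x y /ord_inj /enum_rank_inj. Qed.

Definition comp_min t x := [arg min_(z < x | connect (erel t) x z) vrank z].

Lemma comp_minP t x : connect (erel t) x (comp_min t x) /\
  forall z, connect (erel t) x z -> (vrank (comp_min t x) <= vrank z)%N.
Proof. by rewrite /comp_min; case: arg_minnP => [|m cm minm]; [exact: connect0 | split]. Qed.

End Incidence.

Section ForestSeqCount.
Variables (V : finType) (x0 : V * V) (s : seq (V * V)).
Hypothesis fs : forest_seq s.

(* When edge [j] is added, it merges the components of its endpoints; [hi j]
   is the larger of their two minimal-rank vertices, which stops being minimal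
   in its component forever after. *)
Let a j := comp_min (take j s) (nth x0 s j).1.
Let b j := comp_min (take j s) (nth x0 s j).2.
Let hi j := if (vrank (b j) < vrank (a j))%N then a j else b j.
Let lo j := if (vrank (b j) < vrank (a j))%N then b j else a j.

Lemma merge_hi_lo j : (j < size s)%N -> [/\
  forall z, connect (erel (take j s)) (hi j) z -> (vrank (hi j) <= vrank z)%N,
  connect (erel (take j.+1 s)) (hi j) (lo j), (vrank (lo j) < vrank (hi j))%N &
  exists2 x, x = (nth x0 s j).1 \/ x = (nth x0 s j).2 &
             connect (erel (take j s)) x (hi j)].
Proof.
move=> lt; have nc := forest_seq_nth x0 fs lt.
have [ca mina] := comp_minP (take j s) (nth x0 s j).1.
have [cb minb] := comp_minP (take j s) (nth x0 s j).2.
have rab : vrank (a j) != vrank (b j).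
  apply: contraNneq nc => /vrank_inj eab; apply: connect_trans ca _.
  by rewrite -/(a j) eab connect_erelC.
have sub : {subset take j s <= take j.+1 s}.
  by move=> x; rewrite (take_nth x0 lt) mem_rcons in_cons orbC => ->.
have cab : connect (erel (take j.+1 s)) (a j) (b j).
  have ej : nth x0 s j \in take j.+1 s by rewrite (take_nth x0 lt) mem_rcons mem_head.
  apply: connect_trans; first by rewrite connect_erelC; apply: connect_erel_sub ca.
  apply: connect_trans (connect1 _) (connect_erel_sub sub cb).
  by rewrite /erel -surjective_pairing ej.
rewrite /hi /lo; case: ltnP => hr; split.
- by move=> z cz; apply: mina; apply: connect_trans ca cz.
- exact: cab.
- exact: hr.
- by exists (nth x0 s j).1; [left | ].
- by move=> z cz; apply: minb; apply: connect_trans cb cz.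
- by rewrite connect_erelC.
- by rewrite ltn_neqAle rab hr.
- by exists (nth x0 s j).2; [right | ].
Qed.

Lemma merge_hi_inj : injective (fun j : 'I_(size s) => hi j).
Proof.
have lt_neq (j j' : 'I_(size s)) : (j < j')%N -> hi j != hi j'.
  move=> lt; apply/eqP => eq.
  have [_ chl lohi _] := merge_hi_lo (ltn_ord j).
  have [minh' _ _ _] := merge_hi_lo (ltn_ord j').
  have : connect (erel (take j' s)) (hi j') (lo j).
    rewrite -eq; apply: connect_erel_sub chl => x.
    by rewrite -(subnKC lt) takeD mem_cat => ->.
  by move/minh'; rewrite -eq leqNgt lohi.
move=> j j' /= eq; apply: val_inj; case: (ltngtP j j') => // lt.
  by have := lt_neq _ _ lt; rewrite eq eqxx.
by have := lt_neq _ _ lt; rewrite eq eqxx.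
Qed.

(* The injection [hi] misses the minimal-rank touched vertex. *)
Lemma forest_seq_touched : s != [::] -> (size s < #|[set v | touched s v]|)%N.
Proof.
move=> sn; have s0 : (0 < size s)%N by rewrite lt0n size_eq0.
have te0 : touched s (nth x0 s 0).1 by have [] := touched_mem (mem_nth x0 s0).
pose m0 := [arg min_(v < (nth x0 s 0).1 | touched s v) vrank v].
have [tm0 minm0] : touched s m0 /\ forall v, touched s v -> (vrank m0 <= vrank v)%N.
  by rewrite /m0; case: arg_minnP => // m tm mm; split.
have hiT (j : 'I_(size s)) : hi j \in [set v | touched s v] :\ m0.
  have [_ chl lohi [x hx cxh]] := merge_hi_lo (ltn_ord j).
  have tlo : touched s (lo j).
    apply: (touched_connect (connect_erel_take chl)).
    by apply: contraTneq (lohi) => ->; rewrite ltnn.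
  rewrite !inE; apply/andP; split.
    by apply: contraTneq lohi => ->; rewrite -leqNgt; apply: minm0.
  have [<-|ne] := eqVneq x (hi j); last exact: touched_connect (connect_erel_take cxh) ne.
  by have [h1 h2] := touched_mem (mem_nth x0 (ltn_ord j)); case: hx => ->.
have sub : [set hi j | j : 'I_(size s)] \subset [set v | touched s v] :\ m0.
  by apply/subsetP => v /imsetP[j _ ->].
have := subset_leq_card sub; rewrite card_imset; last exact: merge_hi_inj.
by rewrite card_ord (cardsD1 m0 [set v | touched s v]) inE tm0 add1n ltnS.
Qed.

End ForestSeqCount.

Section NonterminalCount.
Variables (V : finType) (r : nat) (p : 'I_r -> V * V).
Implicit Types (s : seq (V * V)).

Lemma card_terminals : (#|[set v | terminal p v]| <= 2 * r)%N.
Proof.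
have sub : [set v | terminal p v] \subset
    [set (p i).1 | i : 'I_r] :|: [set (p i).2 | i : 'I_r].
  apply/subsetP => v; rewrite inE => /existsP[i /orP[/eqP -> | /eqP ->]];
    rewrite inE; apply/orP; [left|right]; apply/imsetP; by exists i.
apply: leq_trans (subset_leq_card sub) _; apply: leq_trans (leq_card_setU _ _) _.
by rewrite mul2n -addnn leq_add // (leq_trans (leq_imset_card _ _)) // card_ord.
Qed.

(* With T touched terminals and N non-terminals, the handshake lemma gives
   [T + 3 N <= 2 |s|] and the forest gives [|s| + 1 <= T + N], so that
   [N <= T - 2 <= 2 r - 2]. *)
Lemma card_nonterminals s (x0 : V * V) : forest_seq s -> s != [::] ->
  (forall e, e \in s -> e.1 != e.2) ->
  (forall v, v \in nonterminals p s -> (3 <= deg s v)%N) ->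
  (#|nonterminals p s| <= 2 * r - 2)%N.
Proof.
move=> fs sn ne deg3.
set Tch := [set v | touched s v]; set Tm := [set v | terminal p v].
have NT : nonterminals p s = Tch :\: Tm by apply/setP => v; rewrite !inE andbC.
have hs := handshake ne.
have ce : (size s < #|Tch|)%N := forest_seq_touched x0 fs sn.
have cT : (#|Tm| <= 2 * r)%N := card_terminals.
have cI : (#|Tch :&: Tm| <= #|Tm|)%N by apply: subset_leq_card; apply: subsetIr.
have spl : #|Tch| = (#|Tch :&: Tm| + #|Tch :\: Tm|)%N by rewrite cardsID.
have sumge : (#|Tch :&: Tm| + 3 * #|Tch :\: Tm| <= \sum_(v : V) deg s v)%N.
  apply: (@leq_trans (\sum_(v in Tch) deg s v)).
    rewrite (big_setID Tm) /= leq_add //.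
      rewrite -[X in (X <= _)%N]muln1 -sum_nat_const; apply: leq_sum => v.
      by rewrite !inE => /andP[tv _]; rewrite -has_count.
    by rewrite mulnC -sum_nat_const; apply: leq_sum => v vin; apply: deg3; rewrite NT.
  by rewrite [X in (_ <= X)%N](bigID (fun v => v \in Tch)) /= leq_addr.
rewrite NT; move: hs ce cT cI spl sumge.
set A := (\sum_(v : V) deg s v)%N; set B := #|Tch :&: Tm|; set C := #|Tch :\: Tm|.
lia.
Qed.

End NonterminalCount.

Lemma take_cons_cases (T : Type) (s1 s2 : seq T) x k :
  (k <= size (s1 ++ x :: s2))%N ->
  (k <= size s1)%N /\ take k (s1 ++ x :: s2) = take k s1 \/
  exists2 m, (m <= size s2)%N & take k (s1 ++ x :: s2) = s1 ++ x :: take m s2.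
Proof.
move=> ks; rewrite take_cat; case: (ltnP k (size s1)) => h.
  by left; split => //; apply: ltnW.
have [->|ne] := eqVneq k (size s1).
  by left; rewrite subnn take0 cats0 take_size.
right; exists (k - size s1).-1; first by move: ks; rewrite size_cat /=; lia.
by have -> : (k - size s1 = (k - size s1).-1.+1)%N by lia.
Qed.

Lemma take_size_cat_add (T : Type) (s1 s2 : seq T) m :
  take (size s1 + m) (s1 ++ s2) = s1 ++ take m s2.
Proof. by rewrite takeD take_size_cat // drop_size_cat. Qed.

Lemma uniq_replace (T : eqType) (l1 l2 l3 : seq T) x y z :
  uniq (l1 ++ x :: l2 ++ y :: l3) -> z \notin l1 ++ l2 ++ l3 ->
  uniq (l1 ++ l2 ++ z :: l3).
Proof.
move=> u nz.
have -> : uniq (l1 ++ l2 ++ z :: l3) = uniq (z :: l1 ++ l2 ++ l3).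
  by apply: perm_uniq; rewrite catA perm_catC /= perm_cons perm_catC -catA.
rewrite /= nz; apply: subseq_uniq u.
apply: cat_subseq => //; apply: (subseq_trans _ (subseq_cons _ _)).
by apply: cat_subseq => //; apply: subseq_cons.
Qed.

Lemma erel_cat_cons (V : finType) (l1 l2 : seq (V * V)) e x y :
  erel (l1 ++ e :: l2) x y -> erel (l1 ++ l2) x y \/ e = (x, y) \/ e = (y, x).
Proof.
rewrite /erel !mem_cat !in_cons.
have [<-|_] := eqVneq (x, y) e; first by right; left.
have [<-|_] := eqVneq (y, x) e; first by right; right.
by rewrite /= => h; left.
Qed.

Lemma edge_seq_drop (V : finType) (adj : rel V) (s1 s2 : seq (V * V)) e :
  edge_seq adj (s1 ++ e :: s2) -> edge_seq adj (s1 ++ s2).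
Proof.
rewrite /edge_seq !all_cat /= => /andP[/and3P[-> _ ->] u] /=.
apply: subseq_uniq u; rewrite !map_cat; apply: cat_subseq => //=.
exact: subseq_cons.
Qed.

Section ClosureReductions.
Variables (V : finType) (R : realType) (d : V -> V -> R) (r : nat)
  (p : 'I_r -> V * V) (Phi : ('I_r -> R) -> R).
Hypothesis d_ge0 : forall u v, 0 <= d u v.
Hypothesis Phi_mono : forall t t' : 'I_r -> R, (forall i, t i <= t' i) -> Phi t <= Phi t'.
Local Notation cadj := (@complete_adj V).
Implicit Types (s t : seq (V * V)).

Definition pairs_no_later s s' :=
  forall i, joins_no_later d s d s' (p i).1 (p i).2.

Lemma objective_no_later s s' : edge_seq cadj s' -> feasible p cadj s ->
  pairs_no_later s s' ->
  feasible p cadj s' /\ objective p Phi d s' <= objective p Phi d s.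
Proof.
move=> es [_ fs] h; have ct i := conn_time_no_later (nonneg_lengthsW (s := s') d_ge0) (fs i) (h i).
by split; [split=> // i; case: (ct i) | apply: Phi_mono => i; case: (ct i)].
Qed.

Lemma no_later_drop s1 e s2 :
  (forall i m, connect (erel (s1 ++ e :: take m s2)) (p i).1 (p i).2 ->
               connect (erel (s1 ++ take m s2)) (p i).1 (p i).2) ->
  pairs_no_later (s1 ++ e :: s2) (s1 ++ s2).
Proof.
move=> h i k ks ck; case: (take_cons_cases ks) => [[k1 tk] | [m m2 tk]].
  exists k; rewrite /prefix_time takel_cat // -tk; split => //.
  by apply: leq_trans k1 _; rewrite size_cat leq_addr.
exists (size s1 + m)%N; rewrite /prefix_time take_size_cat_add.
split; first by rewrite size_cat leq_add2l.
  by apply: h; rewrite -tk.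
by rewrite tk !big_cat big_cons /= lerD2l lerDr d_ge0.
Qed.

(* Replacing [e1] and [e2] by [f] delays nothing: until [e2] is built, the
   shortcut sequence is ahead by [d e1]; afterwards it is ahead by
   [d e1 + d e2 - d f >= 0]. *)
Lemma no_later_shortcut s1 e1 s2 e2 s3 f :
  d f.1 f.2 <= d e1.1 e1.2 + d e2.1 e2.2 ->
  (forall i m, connect (erel (s1 ++ e1 :: take m s2)) (p i).1 (p i).2 ->
               connect (erel (s1 ++ take m s2)) (p i).1 (p i).2) ->
  (forall i m, connect (erel (s1 ++ e1 :: s2 ++ e2 :: take m s3)) (p i).1 (p i).2 ->
               connect (erel (s1 ++ s2 ++ f :: take m s3)) (p i).1 (p i).2) ->
  pairs_no_later (s1 ++ e1 :: s2 ++ e2 :: s3) (s1 ++ s2 ++ f :: s3).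
Proof.
move=> tri h1 h2 i k ks ck; case: (take_cons_cases ks) => [[k1 tk] | [m m2 tk]].
  exists k; rewrite /prefix_time takel_cat // -tk; split => //.
  by apply: leq_trans k1 _; rewrite size_cat leq_addr.
rewrite tk in ck; case: (take_cons_cases m2) => [[k2 tk2] | [m' m3 tk2]].
  exists (size s1 + m)%N.
  rewrite /prefix_time take_size_cat_add takel_cat // tk tk2; rewrite tk2 in ck.
  split.
  - by rewrite size_cat leq_add2l size_cat (leq_trans k2) ?leq_addr.
  - exact: h1.
  - by rewrite !big_cat big_cons /= lerD2l lerDr d_ge0.
exists (size s1 + (size s2 + m'.+1))%N.
rewrite /prefix_time !take_size_cat_add /= tk tk2; rewrite tk2 in ck.
split; first by rewrite !size_cat /= !leq_add2l ltnS.
  exact: h2.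
by rewrite !(big_cat, big_cons) /=; lra.
Qed.

Lemma drop_redundant_edge s1 e s2 :
  feasible p cadj (s1 ++ e :: s2) -> connect (erel s1) e.1 e.2 ->
  feasible p cadj (s1 ++ s2) /\
  objective p Phi d (s1 ++ s2) <= objective p Phi d (s1 ++ e :: s2).
Proof.
move=> fs c; apply: objective_no_later (edge_seq_drop fs.1) fs _.
apply: no_later_drop => i m; apply: connect_sub.
have sub : {subset s1 <= s1 ++ take m s2} by move=> g gs; rewrite mem_cat gs.
move=> x y /erel_cat_cons [h|[h|h]]; first exact: connect1.
  by apply: connect_erel_sub sub _; rewrite h in c.
by rewrite connect_erelC; apply: connect_erel_sub sub _; rewrite h in c.
Qed.

Lemma drop_offpath_edge s1 e s2 : feasible p cadj (s1 ++ e :: s2) ->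
  (forall i, ~ on_path (s1 ++ e :: s2) (p i).1 (p i).2 e) ->
  feasible p cadj (s1 ++ s2) /\
  objective p Phi d (s1 ++ s2) <= objective p Phi d (s1 ++ e :: s2).
Proof.
move=> fs nop; apply: objective_no_later (edge_seq_drop fs.1) fs _.
apply: no_later_drop => i m /connect_upath [q [pq lq uq]]; have pq0 := pq.
apply/connectP; exists q; last by rewrite lq.
apply: path_consecutive_sub pq => l1 x y l2 dec /erel_cat_cons [//|h].
exfalso; apply: (nop i); exists q; split => //.
  apply: sub_path pq0; apply: sub_erel => g; rewrite !mem_cat !in_cons.
  by case/orP=> [->|/orP[->|/mem_take ->]]; rewrite ?orbT.
by exists l1, l2; case: h => ->; [left|right].
Qed.

Section Shortcut.
Hypothesis d_sym : forall u v, d u v = d v u.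
Hypothesis d_tri : forall u v w, d u w <= d u v + d v w.

Lemma shortcut_edge_seq s1 e1 s2 e2 s3 v :
  edge_seq cadj (s1 ++ e1 :: s2 ++ e2 :: s3) ->
  is_forest (s1 ++ e1 :: s2 ++ e2 :: s3) -> incid v e1 -> incid v e2 ->
  edge_seq cadj (s1 ++ s2 ++ (other v e1, other v e2) :: s3).
Proof.
set s := s1 ++ _ => /andP[alls us] sF i1 i2.
have e1s : e1 \in s by rewrite mem_cat in_cons eqxx orbT.
have e2s : e2 \in s by rewrite !(mem_cat, in_cons) eqxx !orbT.
set u := other v e1; set w := other v e2.
have [E1 uv] := other_spec i1 (allP alls _ e1s).
have [E2 wv] := other_spec i2 (allP alls _ e2s).
have uw : u != w.
  have ue1 : uedge e1 = [set v; u] by case: E1 => ->; rewrite /uedge //= setUC.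
  have ue2 : uedge e2 = [set v; w] by case: E2 => ->; rewrite /uedge //= setUC.
  apply/negP => /eqP euw; move: us; rewrite /s map_cat /= map_cat cat_uniq /=.
  by case/and3P=> _ _ /andP[]; rewrite mem_cat in_cons ue1 ue2 euw eqxx orbT.
have nf : uedge (u, w) \notin [seq uedge g | g <- s1 ++ s2 ++ s3].
  apply/mapP => [[g gin /esym /uedge_pair eg]].
  have gs : g \in s.
    by move: gin; rewrite !(mem_cat, in_cons) => /or3P[->|->|->]; rewrite ?orbT.
  have r1 : erel s u v by apply: (erel_mem e1s); case: E1; [right | left].
  have r2 : erel s v w by apply: (erel_mem e2s); case: E2; [left | right].
  have r3 : erel s w u by apply: (erel_mem gs); case: eg; [right | left].
  apply: (sF [:: u; v; w]) => //.
  by rewrite /ucycle /= r1 r2 r3 !inE negb_or uv uw [v == w]eq_sym wv.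
apply/andP; split.
  apply/allP => g gin; have [->//|ne] := eqVneq g (u, w).
  apply: (allP alls); move: gin; rewrite !(mem_cat, in_cons) (negbTE ne) /=.
  by move=> /or3P[->|->|->]; rewrite ?orbT.
move: us nf; rewrite /s !map_cat /= !map_cat => us nf.
exact: uniq_replace us nf.
Qed.

Lemma shortcut_degree2 s1 e1 s2 e2 s3 v :
  feasible p cadj (s1 ++ e1 :: s2 ++ e2 :: s3) ->
  forest_seq (s1 ++ e1 :: s2 ++ e2 :: s3) ->
  ~~ terminal p v -> incid v e1 -> incid v e2 -> ~~ has (incid v) (s1 ++ s2 ++ s3) ->
  feasible p cadj (s1 ++ s2 ++ (other v e1, other v e2) :: s3) /\
  objective p Phi d (s1 ++ s2 ++ (other v e1, other v e2) :: s3)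
    <= objective p Phi d (s1 ++ e1 :: s2 ++ e2 :: s3).
Proof.
move=> fs sF nt i1 i2 nh; have /andP[alls _] := fs.1.
have e1s : e1 \in s1 ++ e1 :: s2 ++ e2 :: s3 by rewrite mem_cat in_cons eqxx orbT.
have e2s : e2 \in s1 ++ e1 :: s2 ++ e2 :: s3 by rewrite !(mem_cat, in_cons) eqxx !orbT.
have [E1 _] := other_spec i1 (allP alls e1 e1s).
have [E2 _] := other_spec i2 (allP alls e2 e2s).
set u := other v e1 in E1 *; set w := other v e2 in E2 *.
have pv i : (p i).1 != v /\ (p i).2 != v.
  by split; apply: contraNneq nt => <-; apply/existsP; exists i; rewrite eqxx ?orbT.
have noinc l : {subset l <= s1 ++ s2 ++ s3} -> ~~ has (incid v) l.
  by move=> sub; apply/hasPn => g /sub; apply: (hasPn nh).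
apply: objective_no_later (shortcut_edge_seq fs.1 (forest_seq_forest sF) i1 i2) fs _.
apply: no_later_shortcut.
- have d1 : d e1.1 e1.2 = d u v by case: E1 => ->; rewrite //= d_sym.
  have d2 : d e2.1 e2.2 = d v w by case: E2 => ->; rewrite //= d_sym.
  by rewrite d1 d2 /= d_tri.
- move=> i m; apply: connect_drop_leaf (pv i).1 (pv i).2 i1 (noinc _ _) => g.
  by rewrite !mem_cat => /orP[->|/mem_take ->]; rewrite ?orbT.
- move=> i m; apply: connect_shortcut (pv i).1 (pv i).2 i1 i2 (noinc _ _) => g.
  by rewrite !mem_cat => /or3P[->|->|/mem_take ->]; rewrite ?orbT.
Qed.

End Shortcut.

End ClosureReductions.

Lemma count_split (T : Type) (P : pred T) (l : seq T) n : count P l = n.+1 ->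
  exists l1 e l2, [/\ l = l1 ++ e :: l2, P e, ~~ has P l1 & count P l2 = n].
Proof.
elim: l => [|x l IH] //=; case: (boolP (P x)) => px /=.
  by rewrite add1n => -[cs]; exists [::], x, l.
rewrite add0n => /IH [l1 [e [l2 [-> pe hs cs]]]].
by exists (x :: l1), e, l2; rewrite /= (negbTE px).
Qed.

Section PathDegrees.
Variables (V : finType) (r : nat) (p : 'I_r -> V * V).
Implicit Types (s : seq (V * V)).

Lemma deg2_split s v : deg s v = 2 ->
  exists s1 e1 s2 e2 s3, [/\ s = s1 ++ e1 :: s2 ++ e2 :: s3, incid v e1, incid v e2 &
    ~~ has (incid v) (s1 ++ s2 ++ s3)].
Proof.
move=> /count_split [s1 [e1 [t [-> i1 h1 /count_split [s2 [e2 [s3 [-> i2 h2 c3]]]]]]]].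
exists s1, e1, s2, e2, s3; split => //.
by rewrite !has_cat negb_or h1 negb_or h2 has_count c3.
Qed.

Lemma path_around (a v : V) q l1 z1 z2 l2 : a :: q = l1 ++ z1 :: z2 :: l2 ->
  v = z1 \/ v = z2 -> v != a -> v != last a q ->
  exists l1' x y l2', a :: q = l1' ++ x :: v :: y :: l2'.
Proof.
move=> dec [] ev va vl; subst v.
  case/lastP: l1 dec => [|l1' x] dec; first by case: dec => ea _; rewrite ea eqxx in va.
  by exists l1', x, z2, l2; rewrite dec cat_rcons.
case: l2 dec => [|y l2'] dec; last by exists l1, z1, y, l2'.
by move: vl; rewrite -[last a q]/(last a (a :: q)) dec last_cat /= eqxx.
Qed.

(* An edge of [s] at a non-terminal [v] lies on the path of some r-pair,
   which passes through [v] and so uses a second edge at [v]. *)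
Lemma deg_ge2 s v : (forall e, e \in s -> exists i, on_path s (p i).1 (p i).2 e) ->
  uniq s -> ~~ terminal p v -> touched s v -> (2 <= deg s v)%N.
Proof.
move=> cov us nt /hasP[g gs ig].
have [i [q [pq lq uq [l1 [l2 dec]]]]] := cov g gs.
have av : v != (p i).1 by apply: contraNneq nt => ->; apply/existsP; exists i; rewrite eqxx.
have bv : v != last (p i).1 q.
  by rewrite lq; apply: contraNneq nt => ->; apply/existsP; exists i; rewrite eqxx orbT.
have ev : v = g.1 \/ v = g.2 by case/orP: ig => /eqP e; [left|right].
have [l1' [x [y [l2' dec']]]] : exists l1' x y l2', (p i).1 :: q = l1' ++ x :: v :: y :: l2'.
  case: dec => dec; first exact: (path_around dec ev).
  by apply: (path_around dec _ av bv); case: ev => e; [right|left].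
have exv : erel s v x by rewrite erel_sym; apply: (path_consecutive pq dec').
have evy : erel s v y.
  by apply: (path_consecutive pq (l1 := rcons l1' x) (l2 := l2')); rewrite cat_rcons.
have xy : x != y.
  move: uq; rewrite dec' cat_uniq /= => /and3P[_ _ /andP[]].
  by rewrite !inE !negb_or => /and3P[_ xy' _] _.
have [g1 g1s [i1 ey]] := erel_other evy.
have [g2 g2s [i2 ex]] := erel_other exv.
have g12 : g1 != g2 by apply: contraNneq xy => e; rewrite ex ey e.
rewrite /deg -size_filter -[2%N]/(size [:: g1; g2]).
apply: uniq_leq_size; first by rewrite /= inE g12.
by move=> h; rewrite !inE => /orP[] /eqP ->; rewrite mem_filter ?i1 ?i2 ?g1s ?g2s.
Qed.

End PathDegrees.

Section ForestTimes.
Variables (V : finType) (R : realType) (len : V -> V -> R).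
Hypothesis len_ge0 : forall u v, 0 <= len u v.
Implicit Types (s t : seq (V * V)).

Lemma prefix_time_bigmax t (P : pred 'I_(size t)) i0 : P i0 ->
  prefix_time len t (\max_(i | P i) i.+1)
    <= \big[Num.max/0]_(i | P i) prefix_time len t i.+1.
Proof.
move=> Pi0; pose im := [arg max_(i > i0 | P i) (i : nat)].
have [Pim maxim] : P im /\ forall i, P i -> (i <= im)%N.
  by rewrite /im; case: arg_maxnP => // m Pm hm; split.
have Kim : (\max_(i | P i) i.+1 <= im.+1)%N.
  by apply/bigmax_leqP => i Pi; rewrite ltnS; apply: maxim.
apply: le_trans (prefix_time_mono (nonneg_lengthsW (s := t) len_ge0) Kim) _.
exact: (le_bigmax_cond 0 (fun i : 'I_(size t) => prefix_time len t i.+1) Pim).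
Qed.

Lemma conn_time_le_forest s t a b : a != b -> connect (erel s) a b -> perm_eq t s ->
  conn_time len t a b <= forest_conn_time len s t a b.
Proof.
move=> ab cs pts; have [q [pq lq uq]] := connect_upath cs.
pose P := fun i : 'I_(size t) => `[< on_path s a b (nth (a, a) t i) >].
have onP x y : (exists l1 l2, a :: q = l1 ++ x :: y :: l2) -> erel s x y ->
    exists j : 'I_(size t), P j /\ (nth (a, a) t j = (x, y) \/ nth (a, a) t j = (y, x)).
  move=> [l1 [l2 dec]] exy.
  have [g gs hg] : exists2 g, g \in s & (g = (x, y) \/ g = (y, x)).
    by case/orP: exy => h; [exists (x, y) => //; left | exists (y, x) => //; right].
  have gt : g \in t by rewrite (perm_mem pts).
  have jlt : (index g t < size t)%N by rewrite index_mem.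
  exists (Ordinal jlt); rewrite /P /= nth_index //; split => //.
  by apply/asboolP; exists q; split => //; exists l1, l2; case: hg => ->; [left | right].
pose K := (\max_(i | P i) i.+1)%N.
have Ksz : (K <= size t)%N by apply/bigmax_leqP => i _; apply: ltn_ord i.
have cK : connect (erel (take K t)) a b.
  apply/connectP; exists q; last by rewrite lq.
  apply: path_consecutive_sub pq => l1 x y l2 dec exy.
  have [j [Pj hj]] := onP x y (ex_intro _ l1 (ex_intro _ l2 dec)) exy.
  have jK : (j < K)%N := leq_bigmax_cond (F := fun i : 'I_(size t) => i.+1) _ Pj.
  apply: erel_mem hj; rewrite -(nth_take _ jK); apply: mem_nth.
  by rewrite size_takel.
apply: le_trans (conn_time_le (nonneg_lengthsW (s := t) len_ge0) Ksz cK) _.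
case: q pq lq uq onP {cK} => [/= _ lq|y q pq _ _ onP]; first by rewrite lq eqxx in ab.
have [j1 [Pj1 _]] := onP a y (ex_intro _ [::] (ex_intro _ q erefl)) (andP pq).1.
exact: prefix_time_bigmax Pj1.
Qed.

Lemma on_path_cut (F : seq (V * V)) a b (g : V * V) : is_forest F -> g \in F -> g.1 != g.2 ->
  on_path F a b g -> ~ connect (erel [seq f <- F | uedge f != uedge g]) a b.
Proof.
move=> fF gF ne [q [pq lq uq [l1 [l2 dec]]]] cF; apply: (forest_cut fF gF ne).
set F' := [seq f <- F | uedge f != uedge g] in cF *.
have av1 x y : x != g.1 -> y != g.1 -> erel F x y -> erel F' x y.
  by apply: erel_avoid; left.
have av2 x y : x != g.2 -> y != g.2 -> erel F x y -> erel F' x y.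
  by apply: erel_avoid; right.
case: dec => dec.
  have c1 := path_prefix_avoid pq dec uq av2.
  have c2 := path_suffix_avoid pq dec uq av1.
  rewrite lq connect_erelC in c2; rewrite connect_erelC in c1.
  exact: connect_trans (connect_trans c1 cF) c2.
have c1 := path_prefix_avoid pq dec uq av1.
have c2 := path_suffix_avoid pq dec uq av2.
rewrite lq in c2; rewrite connect_erelC in cF.
exact: connect_trans (connect_trans c2 cF) c1.
Qed.

Lemma forest_conn_time_le s a b : is_forest s -> uniq [seq uedge e | e <- s] ->
  (forall e, e \in s -> e.1 != e.2) -> connect (erel s) a b ->
  forest_conn_time len s s a b <= conn_time len s a b.
Proof.
move=> fF us ne cs; have [ck1 ck2] := conn_index_spec cs.
apply: bigmax_le => [|i /asboolP opi]; first by apply: sumr_ge0 => e _; apply: len_ge0.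
apply: prefix_time_mono (nonneg_lengthsW len_ge0) _; rewrite leqNgt; apply/negP => hk.
set g := nth (a, a) s i; have gs : g \in s := mem_nth _ (ltn_ord i).
set k := conn_index s a b in ck1 ck2 hk.
have ki : (k <= i)%N by rewrite -ltnS.
have gd : g \in drop k s.
  have -> : g = nth (a, a) (drop k s) (i - k) by rewrite nth_drop subnKC.
  by apply: mem_nth; rewrite size_drop ltn_sub2r // (leq_ltn_trans ki).
have sub : {subset take k s <= [seq f <- s | uedge f != uedge g]}.
  move=> x xt; rewrite mem_filter (mem_take xt) andbT.
  move: us; rewrite -[s in map _ s](cat_take_drop k) map_cat cat_uniq.
  case/and3P=> _ /hasPn /(_ _ (map_f _ gd)) /= hx _.
  by apply: contraNneq hx => <-; apply: map_f.
exact: on_path_cut fF gs (ne _ gs) opi (connect_erel_sub sub ck2).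
Qed.

End ForestTimes.

Section Optimum.
Variables (V : finType) (R : realType) (adj : rel V) (len : V -> V -> R)
  (r : nat) (p : 'I_r -> V * V) (Phi : ('I_r -> R) -> R).
Implicit Types (s t : seq (V * V)).

Lemma perm_feasible s t : feasible p adj s -> perm_eq t s -> feasible p adj t.
Proof.
move=> [/andP[al us] cs] pts; split.
  by rewrite /edge_seq (perm_all _ pts) al (perm_uniq (perm_map _ pts)).
by move=> i; apply: connect_erel_sub (cs i) => x; rewrite (perm_mem pts).
Qed.

(* Distinct edges have distinct vertex sets, so feasible sequences are
   bounded in length and form a finite family. *)
Lemma exists_optimal_seq : (exists s, feasible p adj s) ->
  exists s0, feasible p adj s0 /\
    forall t, feasible p adj t -> objective p Phi len s0 <= objective p Phi len t.
Proof.
pose N := #|{set V}|.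
have bnd t : feasible p adj t -> (size t <= N)%N.
  by case=> /andP[_ ut] _; rewrite -(size_map (@uedge V)) -(card_uniqP ut) max_card.
move=> [s fs]; pose P := fun b : N.-bseq (V * V) => `[< feasible p adj b >].
have P0 : P (Bseq (bnd s fs)) by apply/asboolP.
case: (arg_minP (fun b : N.-bseq (V * V) => objective p Phi len b) P0) => b /asboolP fb minb.
by exists b; split=> // t ft; apply: (minb (Bseq (bnd t ft))); apply/asboolP.
Qed.

End Optimum.

Section ClosureOptimum.
Variables (V : finType) (R : realType) (d : V -> V -> R) (r : nat)
  (p : 'I_r -> V * V) (Phi : ('I_r -> R) -> R).
Hypothesis d_ge0 : forall u v, 0 <= d u v.
Hypothesis d_sym : forall u v, d u v = d v u.
Hypothesis d_tri : forall u v w, d u w <= d u v + d v w.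
Hypothesis Phi_mono : forall t t' : 'I_r -> R, (forall i, t i <= t' i) -> Phi t <= Phi t'.
Hypothesis p_neq : forall i, (p i).1 != (p i).2.
Hypothesis p_uniq : forall i j, uedge (p i) = uedge (p j) -> i = j.
Hypothesis r_ge2 : (2 <= r)%N.
Local Notation cadj := (@complete_adj V).
Implicit Types (s t : seq (V * V)).

Definition reduced s := [/\ forest_seq s,
  forall e, e \in s -> exists i, on_path s (p i).1 (p i).2 e &
  forall v, ~~ terminal p v -> deg s v != 2].

Lemma reduced_or_shrinks s : feasible p cadj s -> reduced s \/
  exists s', [/\ feasible p cadj s', objective p Phi d s' <= objective p Phi d s &
                 (size s' < size s)%N].
Proof.
move=> fs.
have [[s1 [e [s2 [es c]]]]|nA] :=
  pselect (exists s1 e s2, s = s1 ++ e :: s2 /\ connect (erel s1) e.1 e.2).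
  subst s; have [fs' ob] := drop_redundant_edge d_ge0 Phi_mono fs c.
  by right; exists (s1 ++ s2); rewrite !size_cat /= addnS ltnS.
have fA : forest_seq s.
  by move=> s1 e s2 es; apply/negP => c; apply: nA; exists s1, e, s2.
have [[s1 [e [s2 [es nop]]]]|nB] := pselect (exists s1 e s2,
    s = s1 ++ e :: s2 /\ forall i, ~ on_path s (p i).1 (p i).2 e).
  subst s; have [fs' ob] := drop_offpath_edge d_ge0 Phi_mono fs nop.
  by right; exists (s1 ++ s2); rewrite !size_cat /= addnS ltnS.
have cov e : e \in s -> exists i, on_path s (p i).1 (p i).2 e.
  move=> es; apply: contrapT => hn; apply: nB; case/splitPr: es hn => s1 s2 hn.
  by exists s1, e, s2; split => // i hi; apply: hn; exists i.
have [[v [nt /deg2_split[s1 [e1 [s2 [e2 [s3 [es i1 i2 nh]]]]]]]]|nC] :=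
  pselect (exists v, ~~ terminal p v /\ deg s v = 2).
  subst s; have [fs' ob] := shortcut_degree2 d_ge0 Phi_mono d_sym d_tri fs fA nt i1 i2 nh.
  by right; eexists; split; [exact: fs' | exact: ob | rewrite !size_cat /= size_cat /=; lia].
by left; split => // v nt; apply/eqP => dv; apply: nC; exists v.
Qed.

Lemma reduce_seq s : feasible p cadj s -> exists s',
  [/\ feasible p cadj s', objective p Phi d s' <= objective p Phi d s & reduced s'].
Proof.
have [n] := ubnP (size s); elim: n s => // n IH s /ltnSE ss fs.
have [red|[s' [fs' ob sz]]] := reduced_or_shrinks fs; first by exists s.
have [s'' [fs'' ob' red]] := IH s' (leq_trans sz ss) fs'.
by exists s''; split=> //; apply: le_trans ob' ob.
Qed.

Lemma pairs_feasible : feasible p cadj [seq p i | i <- enum 'I_r].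
Proof.
split=> [|i]; last by apply: connect1; rewrite /erel -surjective_pairing map_f ?mem_enum.
apply/andP; split; first by apply/allP => e /mapP[i _ ->]; apply: p_neq.
by rewrite -map_comp map_inj_in_uniq ?enum_uniq // => i j _ _ /= /p_uniq.
Qed.

Lemma closure_optimal_reduced : exists s, [/\ feasible p cadj s,
  forall t, feasible p cadj t -> objective p Phi d s <= objective p Phi d t &
  reduced s].
Proof.
have [s0 [fs0 m0]] := exists_optimal_seq d Phi (ex_intro _ _ pairs_feasible).
have [s [fs ob red]] := reduce_seq fs0.
by exists s; split=> // t ft; apply: le_trans ob (m0 t ft).
Qed.

Lemma reduced_r_forest s : feasible p cadj s -> reduced s -> r_forest p cadj s.
Proof. by move=> [es cs] [fA cov _]; split=> //; apply: forest_seq_forest. Qed.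

Lemma reduced_forest_value s : feasible p cadj s -> reduced s ->
  (forall t, feasible p cadj t -> objective p Phi d s <= objective p Phi d t) ->
  forest_value p Phi d s (objective p Phi d s).
Proof.
move=> fs [fA _ _] opt; have [/andP[alls us] cs] := fs.
have ge t : perm_eq t s ->
    objective p Phi d t <= Phi (fun i => forest_conn_time d s t (p i).1 (p i).2).
  by move=> pts; apply: Phi_mono => i; apply: conn_time_le_forest (p_neq i) (cs i) pts.
split.
  exists s; split=> //; apply/le_anti/andP; split; last exact: ge (perm_refl s).
  apply: Phi_mono => i; apply: forest_conn_time_le (forest_seq_forest fA) us _ (cs i) => //.
  by move=> e /(allP alls).
by move=> t pts; apply: le_trans (opt _ (perm_feasible fs pts)) (ge t pts).
Qed.

Lemma reduced_nonterminals s : feasible p cadj s -> reduced s ->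
  (#|nonterminals p s| <= 2 * r - 2)%N.
Proof.
move=> [/andP[alls us] cs] [fA cov d2]; have r0 : (0 < r)%N by apply: leq_trans r_ge2.
have sn : s != [::].
  apply/eqP => s0; have := cs (Ordinal r0); rewrite s0 => /connectP[[|y q]] //= _ e.
  by move: (p_neq (Ordinal r0)); rewrite e eqxx.
apply: (card_nonterminals (p (Ordinal r0)) fA sn) => [e /(allP alls) //|v].
rewrite inE => /andP[tv nt]; have := deg_ge2 cov (map_uniq us) nt tv.
by rewrite leq_eqVlt eq_sym (negbTE (d2 v nt)).
Qed.

End ClosureOptimum.

Section Dedup.
Variables (V : finType) (R : realType).
Implicit Types (l : seq (V * V)).

Definition orient (e : V * V) := if (vrank e.1 <= vrank e.2)%N then e else (e.2, e.1).

(* [undup] keeps last occurrences; reversing twice keeps first ones instead,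
   so that [dedup] of a sequence extends [dedup] of each of its prefixes. *)
Definition dedup l := rev (undup (rev (map orient l))).

Lemma orientP e : orient e = e \/ orient e = (e.2, e.1).
Proof. by rewrite /orient; case: ifP; [left | right]. Qed.

Lemma orient_swap e : orient (e.2, e.1) = orient e.
Proof.
case: e => a b; rewrite /orient /=.
case: (leqP (vrank b) (vrank a)) => h1; case: (leqP (vrank a) (vrank b)) => h2 //.
  have e : vrank a = vrank b by apply/eqP; rewrite eqn_leq h1 h2.
  by rewrite (vrank_inj e).
by move: (ltn_trans h1 h2); rewrite ltnn.
Qed.

Lemma mem_dedup l x : (x \in dedup l) = (x \in map orient l).
Proof. by rewrite mem_rev mem_undup mem_rev. Qed.

Lemma dedup_cat l1 l2 : exists l3, dedup (l1 ++ l2) = dedup l1 ++ l3.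
Proof. by rewrite /dedup map_cat rev_cat undup_cat rev_cat; eexists. Qed.

Lemma erel_dedup l x y : erel l x y -> erel (dedup l) x y.
Proof.
have h g : g \in l -> erel (dedup l) g.1 g.2.
  move=> gl; apply: (@erel_mem _ _ (orient g)); first by rewrite mem_dedup map_f.
  by case: (orientP g) => ->; [left; case: g {gl} | right].
by rewrite /erel => /orP[/h //|/h]; rewrite erel_sym.
Qed.

Lemma uniq_uedge_dedup l : uniq [seq uedge e | e <- dedup l].
Proof.
rewrite map_inj_in_uniq ?rev_uniq ?undup_uniq // => x y; rewrite !mem_dedup.
move=> /mapP[g _ ->] /mapP[g' _ ->].
have ue e : uedge (orient e) = uedge e.
  by case: (orientP e) => ->; rewrite // -uedge_sym; case: e.
rewrite !ue => /esym; case: g => a b /uedge_pair [->|->] //.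
by rewrite -(orient_swap (a, b)).
Qed.

Lemma sum_undup (f : V * V -> R) l : (forall e, e \in l -> 0 <= f e) ->
  \sum_(e <- undup l) f e <= \sum_(e <- l) f e.
Proof.
elim: l => [|x l IH] h //=; have IH' := IH (fun e el => h e (mem_behead (s := x :: l) el)).
case: ifP => _; rewrite big_cons; last by rewrite big_cons lerD2l.
by apply: le_trans IH' _; rewrite lerDr; apply: h; rewrite mem_head.
Qed.

Lemma sum_dedup (c : V -> V -> R) l :
  (forall e, e \in l -> c e.1 e.2 = c e.2 e.1 /\ 0 <= c e.1 e.2) ->
  \sum_(e <- dedup l) c e.1 e.2 <= \sum_(e <- l) c e.1 e.2.
Proof.
move=> cl; have orient_c e : e \in l -> c (orient e).1 (orient e).2 = c e.1 e.2.
  by move=> el; case: (orientP e) => -> //=; rewrite (cl e el).1.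
have pe : perm_eq (dedup l) (undup (map orient l)).
  by apply: uniq_perm; rewrite ?rev_uniq ?undup_uniq // => x; rewrite mem_dedup mem_undup.
rewrite (perm_big _ pe); apply: le_trans (sum_undup _) _.
  by move=> e /mapP[g gl ->]; rewrite orient_c //; case: (cl g gl).
by rewrite big_map big_seq [leRHS]big_seq le_eqVlt (eq_bigr _ orient_c) eqxx.
Qed.

End Dedup.

Section ShortestPaths.
Variables (V : finType) (R : realType) (adj : rel V) (c d : V -> V -> R).
Hypothesis adj_sym : symmetric adj.
Hypothesis c_pos : forall u v, adj u v -> c u v = c v u /\ 0 < c u v.
Hypothesis d_sp : is_shortest_dist adj c d.
Implicit Types (s l : seq (V * V)).

Lemma walk_len_ge0 x q : path adj x q -> 0 <= walk_len c x q.
Proof.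
elim: q x => [|y q IH] x //= /andP[xy pq].
by apply: addr_ge0; [exact: ltW (c_pos xy).2 | exact: IH].
Qed.

Lemma walk_len_cat x q1 q2 :
  walk_len c x (q1 ++ q2) = walk_len c x q1 + walk_len c (last x q1) q2.
Proof. by elim: q1 x => [|y q1 IH] x /=; rewrite ?add0r // IH addrA. Qed.

Lemma walk_rev x q : path adj x q -> exists q', [/\ path adj (last x q) q',
  last (last x q) q' = x & walk_len c (last x q) q' = walk_len c x q].
Proof.
elim: q x => [|y q IH] x /=; first by exists [::].
case/andP=> xy pq; have [q' [pq' lq' wq']] := IH y pq.
exists (rcons q' x); split; first by rewrite rcons_path pq' lq' adj_sym.
  by rewrite last_rcons.
by rewrite -cats1 walk_len_cat lq' /= wq' addr0 addrC (c_pos xy).1.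
Qed.

Lemma sp_dist_ge0 u v : 0 <= d u v.
Proof. by have [[q [pq _ <-]] _] := d_sp u v; apply: walk_len_ge0. Qed.

Lemma sp_dist_le u v : adj u v -> d u v <= c u v.
Proof. by move=> uv; have [_ /(_ [:: v])] := d_sp u v; rewrite /= uv addr0; apply. Qed.

Lemma sp_dist_sym u v : d u v = d v u.
Proof.
have le x y : d y x <= d x y.
  have [[q [pq lq <-]] _] := d_sp x y.
  have [q' [pq' lq' <-]] := walk_rev pq; rewrite lq in pq' lq' *.
  by have [_] := d_sp y x; apply.
by apply/le_anti; rewrite !le.
Qed.

Lemma sp_dist_tri u v w : d u w <= d u v + d v w.
Proof.
have [[q1 [p1 l1 <-]] _] := d_sp u v; have [[q2 [p2 l2 <-]] _] := d_sp v w.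
have [_ h] := d_sp u w; rewrite -l1 -walk_len_cat; apply: h.
  by rewrite cat_path p1 l1 p2.
by rewrite last_cat l1.
Qed.

Fixpoint walk_edges (x : V) (q : seq V) : seq (V * V) :=
  if q is y :: q' then (x, y) :: walk_edges y q' else [::].

Lemma walk_edges_len x q : \sum_(e <- walk_edges x q) c e.1 e.2 = walk_len c x q.
Proof. by elim: q x => [|y q IH] x /=; rewrite ?big_nil // big_cons IH. Qed.

Lemma walk_edges_adj x q e : path adj x q -> e \in walk_edges x q -> adj e.1 e.2.
Proof.
elim: q x => [|y q IH] x //= /andP[xy pq]; rewrite in_cons => /orP[/eqP -> //|].
exact: IH.
Qed.

Lemma walk_edges_connect x q : connect (erel (walk_edges x q)) x (last x q).
Proof.
elim: q x => [|y q IH] x /=; first exact: connect0.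
apply: (@connect_trans _ _ y); first by apply: connect1; rewrite /erel mem_head.
by apply: connect_erel_sub (IH y) => g gin; rewrite in_cons gin orbT.
Qed.

Definition sp_walk u v : seq V := sval (cid (proj1 (d_sp u v))).

Lemma sp_walkP u v : [/\ path adj u (sp_walk u v), last u (sp_walk u v) = v &
  walk_len c u (sp_walk u v) = d u v].
Proof. exact: svalP (cid (proj1 (d_sp u v))). Qed.

Definition expand l := flatten [seq walk_edges e.1 (sp_walk e.1 e.2) | e <- l].

Lemma expand_cat l1 l2 : expand (l1 ++ l2) = expand l1 ++ expand l2.
Proof. by rewrite /expand map_cat flatten_cat. Qed.

Lemma expand_adj l g : g \in expand l -> adj g.1 g.2.
Proof.
move=> /flattenP[w /mapP[e _ ->]]; apply: walk_edges_adj.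
by have [] := sp_walkP e.1 e.2.
Qed.

Lemma expand_len l : \sum_(g <- expand l) c g.1 g.2 = \sum_(e <- l) d e.1 e.2.
Proof.
rewrite big_flatten big_map; apply: eq_bigr => e _.
by rewrite walk_edges_len; have [_ _ ->] := sp_walkP e.1 e.2.
Qed.

Lemma erel_expand l x y : erel l x y -> connect (erel (expand l)) x y.
Proof.
have h e : e \in l -> connect (erel (expand l)) e.1 e.2.
  move=> el; have [_ le _] := sp_walkP e.1 e.2.
  rewrite -{1}le; apply: connect_erel_sub (walk_edges_connect _ _) => g gw.
  apply/flattenP; exists (walk_edges e.1 (sp_walk e.1 e.2)) => //.
  exact: (map_f (fun e => walk_edges e.1 (sp_walk e.1 e.2))).
by case/orP=> /h //; rewrite connect_erelC.
Qed.

Definition realize s := dedup (expand s).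

Lemma realize_adj s g : g \in realize s -> adj g.1 g.2.
Proof.
rewrite mem_dedup => /mapP[g' /expand_adj a' ->].
by case: (orientP g') => -> //=; rewrite adj_sym.
Qed.

Lemma realize_no_later s a b : joins_no_later d s c (realize s) a b.
Proof.
move=> k ks ck; have [l3 e3] := dedup_cat (expand (take k s)) (expand (drop k s)).
have sdef : realize s = dedup (expand (take k s)) ++ l3.
  by rewrite /realize -e3 -expand_cat cat_take_drop.
exists (size (dedup (expand (take k s)))); rewrite sdef take_size_cat //; split.
- by rewrite size_cat leq_addr.
- apply: connect_sub ck => x y /erel_expand; apply: connect_sub => u w.
  by move/erel_dedup/connect1.
- rewrite /prefix_time take_size_cat // -expand_len; apply: sum_dedup => e /expand_adj /c_pos [-> /ltW].
  by split.
Qed.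

Section Objectives.
Variables (r : nat) (p : 'I_r -> V * V) (Phi : ('I_r -> R) -> R).
Hypothesis Phi_mono : forall t t' : 'I_r -> R, (forall i, t i <= t' i) -> Phi t <= Phi t'.

Lemma closure_objective_le s : irreflexive adj -> feasible p adj s ->
  feasible p (@complete_adj V) s /\ objective p Phi d s <= objective p Phi c s.
Proof.
move=> adj_irr [/andP[al us] cs]; split.
  split=> //; apply/andP; split=> //; apply/allP => e es.
  by apply: contraTneq (allP al e es) => ->; rewrite adj_irr.
apply: Phi_mono => i /=; rewrite !conn_timeE /prefix_time big_seq [leRHS]big_seq.
by apply: ler_sum => e /mem_take es; apply: sp_dist_le; apply: (allP al e es).
Qed.

Lemma realize_objective_le s : feasible p (@complete_adj V) s ->
  feasible p adj (realize s) /\ objective p Phi c (realize s) <= objective p Phi d s.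
Proof.
move=> [_ cs].
have nn : nonneg_lengths c (realize s) by move=> g /realize_adj /c_pos [_ /ltW].
have ct i := conn_time_no_later nn (cs i) (@realize_no_later s _ _).
split; last by apply: Phi_mono => i; case: (ct i).
split; last by move=> i; case: (ct i).
by apply/andP; split; [apply/allP => g /realize_adj | apply: uniq_uedge_dedup].
Qed.

End Objectives.

End ShortestPaths.

Theorem corollary2 (V : finType) (R : realType)
    (adj : rel V) (c : V -> V -> R)
    (r : nat) (p : 'I_r -> V * V) (Phi : ('I_r -> R) -> R)
    (dhat : V -> V -> R) :
  (* G: simple undirected connected network with positive edge lengths *)
  symmetric adj -> irreflexive adj ->
  (forall u v, connect adj u v) ->
  (forall u v, adj u v -> c u v = c v u /\ 0 < c u v) ->
  (* r >= 2 r-pairs, forming a set of pairs of distinct vertices *)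
  (2 <= r)%N ->
  (forall i, (p i).1 != (p i).2) ->
  (forall i j, uedge (p i) = uedge (p j) -> i = j) ->
  (* Phi is non-decreasing in the connection times *)
  (forall t t' : 'I_r -> R, (forall i, t i <= t' i) -> Phi t <= Phi t') ->
  (* dhat: edge lengths of the metric closure = shortest-path distances *)
  is_shortest_dist adj c dhat ->
  exists z : R,
    [/\ is_opt_value p Phi adj c z,
        is_opt_value p Phi (@complete_adj V) dhat z &
        exists F : seq (V * V),
          [/\ r_forest p (@complete_adj V) F,
              forest_value p Phi dhat F z &
              (#|nonterminals p F| <= 2 * r - 2)%N]].
Proof.
move=> adj_sym adj_irr _ c_pos r_ge2 p_neq p_uniq Phi_mono d_sp.
have d_ge0 := sp_dist_ge0 c_pos d_sp.
have [s [fs opt red]] := closure_optimal_reduced d_ge0 (sp_dist_sym adj_sym c_pos d_sp)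
  (sp_dist_tri d_sp) Phi_mono p_neq p_uniq r_ge2.
have G_le t : feasible p adj t -> objective p Phi dhat s <= objective p Phi c t.
  move=> ft; have [fh oh] := closure_objective_le d_sp Phi_mono adj_irr ft.
  exact: le_trans (opt _ fh) oh.
have [fs' ob'] := realize_objective_le adj_sym c_pos d_sp Phi_mono fs.
exists (objective p Phi dhat s); split.
- by split=> //; exists (realize d_sp s); split=> //; apply/le_anti; rewrite ob' (G_le _ fs').
- by split=> //; exists s.
- exists s; split; first exact: reduced_r_forest fs red.
    exact: (reduced_forest_value d_ge0 Phi_mono p_neq fs red opt).
  exact: (reduced_nonterminals p_neq r_ge2 fs red).
Qed.
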